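(* Let $(\mathbf{P},d_{\mathbf{P}})$ be a finite metric poset and $M,N,O$ be $\mathbf{P}$-modules. Let $E_\bullet,F_\bullet,G_\bullet$ be projective resolutions of $M,N,O$ respectively (each term with a fixed decomposition into indecomposable projectives) such that $|E_i|=|F_i|=|G_i|$ for all $i\ge0$. Then \[ \mathrm{dist}_{\mathrm{R}}(E_\bullet,G_\bullet)\ \le\ \mathrm{dist}_{\mathrm{R}}(E_\bullet,F_\bullet)+\mathrm{dist}_{\mathrm{R}}(F_\bullet,G_\bullet). \]
   Context: Fix a field $k$; $\mathrm{vect}$ is the category of finite-dimensional $k$-vector spaces; a finite poset is a category with a unique morphism $x\to y$ iff $x\le y$; a $\mathbf{P}$-module is a functor $\mathbf{P}\to\mathrm{vect}$; a finite metric poset is a finite poset with a metric $d_{\mathbf{P}}$. For $x\in\mathbf{P}$, $k[\mathbf{P}]_x$ is the $\mathbf{P}$-module with value $k$ at $y\ge x$ and $0$ elsewhere, identity structure maps; these are the indecomposable projectives. For $y\le x$, $\rho(x\ge y):k[\mathbf{P}]_x\to k[\mathbf{P}]_y$ is the canonical morphism (identity at each $z\ge x$), and $\rho(x\ge y)=0$ if $y\not\le x$. For projectives with decompositions $E=\bigoplus_{x\in\mathrm{smd}(E)}k[\mathbf{P}]_x$ and $F=\bigoplus_{y\in\mathrm{smd}(F)}k[\mathbf{P}]_y$ ($\mathrm{smd}$ = indexed multiset of summand indices), each $\alpha:E\to F$ is uniquely $[a_{x,y}\rho(x\ge y)]$ with $a_{x,y}\in k$, $a_{x,y}=0$ unless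 $x\ge y$; $\mathrm{Mat}(\alpha)=[a_{x,y}]$. A projective resolution $E_\bullet=(E_i,\partial^E_i:E_{i+1}\to E_i)_{i\ge0}$ has $|E_i|$ = number of summands of $E_i$. A matching of $(E_\bullet,F_\bullet)$ (when $|E_i|=|F_i|$ for all $i$) is a family of bijections $B_i:\mathrm{smd}(E_i)\to\mathrm{smd}(F_i)$ such that the $(x',x)$-entry of $\mathrm{Mat}(\partial^E_i)$ equals the $(B_{i+1}(x'),B_i(x))$-entry of $\mathrm{Mat}(\partial^F_i)$ for all $i\ge0$, $x\in\mathrm{smd}(E_i)$, $x'\in\mathrm{smd}(E_{i+1})$; its cost is $\sup\{d_{\mathbf{P}}(x,B_i(x))\mid i\ge0,x\in\mathrm{smd}(E_i)\}$. $\mathrm{dist}_{\mathrm{R}}(E_\bullet,F_\bullet)$ is the infimum of costs of matchings, and $\infty$ if there is no matching. *)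

From HB Require Import structures.
From mathcomp Require Import all_boot all_order all_algebra.
From mathcomp Require Import boolp classical_sets reals constructive_ereal ereal.

Import Order.TTheory GRing.Theory Num.Theory.
Local Open Scope ring_scope.

Section Defs.
Variables (k : fieldType) (disp : Order.disp_t) (P : finPOrderType disp).

(* A P-module (functor P -> vect): a finite-dimensional space k^(pdim x) at
   each x, and structure maps acting on row vectors (v |-> v *m pmap x y)
   for x <= y, functorial. *)
Record pmod := PMod {
  pdim : P -> nat;
  pmap : forall x y : P, 'M[k]_(pdim x, pdim y);
  pmap_id : forall x, pmap x x = 1%:M;
  pmap_comp : forall x y z, (x <= y)%O -> (y <= z)%O ->
     pmap x y *m pmap y z = pmap x z }.

(* A row vector of E(z), E = (+)_{j} k[P]_{lab j}, seen inside k^n: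
   its support lies among the summands j with lab j <= z. *)
Definition supported {n} (lab : 'I_n -> P) (z : P) (v : 'rV[k]_n) :=
  forall j, ~~ (lab j <= z)%O -> v 0 j = 0.

(* The augmentation E_0 -> M at z, determined by the images
   eps j \in M(lab j) of the generators of the summands k[P]_(lab j). *)
Definition epsmx (M : pmod) {n} (lab : 'I_n -> P)
  (eps : forall j : 'I_n, 'rV[k]_(pdim M (lab j))) (z : P) :
  'M[k]_(n, pdim M z) :=
  \matrix_(j < n) (if (lab j <= z)%O then eps j *m pmap M (lab j) z else 0).

(* A projective resolution of M with fixed decompositions:
   E_i = (+)_{j < rn i} k[P]_(rlab i j), boundary E_{i+1} -> E_i given by
   Mat(d_i) = rD i (entry (j',j) is the coefficient of rho(rlab (i+1) j' >= rlab i j)),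
   augmentation reps; exact at every point z of P. *)
Record projres (M : pmod) := ProjRes {
  rn : nat -> nat;
  rlab : forall i, 'I_(rn i) -> P;
  rD : forall i, 'M[k]_(rn i.+1, rn i);
  reps : forall j : 'I_(rn 0%N), 'rV[k]_(pdim M (rlab 0%N j));
  rD_supp : forall i j' j, rD i j' j != 0 -> (rlab i j <= rlab i.+1 j')%O;
  r_exact : forall i z (v : 'rV[k]_(rn i.+1)), supported (rlab i.+1) z v ->
    (v *m rD i = 0 <->
     exists u, supported (rlab i.+2) z u /\ u *m rD i.+1 = v);
  r_exact0 : forall z (v : 'rV[k]_(rn 0%N)), supported (rlab 0%N) z v ->
    (v *m epsmx M (rlab 0%N) reps z = 0 <->
     exists u, supported (rlab 1%N) z u /\ u *m rD 0%N = v);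
  r_surj : forall z (m : 'rV[k]_(pdim M z)),
    exists v, supported (rlab 0%N) z v /\ v *m epsmx M (rlab 0%N) reps z = m }.

End Defs.
Arguments pmod k {disp} P.
Arguments projres {k disp P}.
Arguments pdim {k disp P}.
Arguments pmap {k disp P}.
Arguments rn {k disp P M}.
Arguments rlab {k disp P M}.
Arguments rD {k disp P M}.
Arguments reps {k disp P M}.

Definition is_metric {T : Type} {R : realType} (d : T -> T -> R) :=
  [/\ forall x y, d x y = 0 <-> x = y,
      forall x y, d x y = d y x &
      forall x y z, d x z <= d x y + d y z].

Section Dist.
Variables (k : fieldType) (disp : Order.disp_t) (P : finPOrderType disp).
Variables (R : realType) (d : P -> P -> R).

Definition is_matching {M N : pmod k P} (E : projres M) (F : projres N)
  (B : forall i, 'I_(rn E i) -> 'I_(rn F i)) : Prop :=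
  (forall i, bijective (B i)) /\
  (forall i x' x, rD E i x' x = rD F i (B i.+1 x') (B i x)).

(* cost = sup of d(x, B_i x); the sup of this set of nonnegative reals is
   taken with the usual convention sup(empty) = 0, hence the extra 0. *)
Definition mcost {M N : pmod k P} (E : projres M) (F : projres N)
  (B : forall i, 'I_(rn E i) -> 'I_(rn F i)) : \bar R :=
  ereal_sup ([set 0%:E] `|`
    [set y | exists i (x : 'I_(rn E i)),
        y = (d (rlab E i x) (rlab F i (B i x)))%:E]).

Definition distR {M N : pmod k P} (E : projres M) (F : projres N) : \bar R :=
  ereal_inf [set mcost E F B | B in [set B | is_matching E F B]].

End Dist.
Arguments is_matching {k disp P M N}.
Arguments mcost {k disp P R} d {M N}.
Arguments distR {k disp P R} d {M N}.

(** Matchings compose: if B matches E with F and B' matches F with G, then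
    B' \o B matches E with G, and by the triangle inequality for d its cost
    is at most cost(B) + cost(B').  Taking infima over B and B' gives the
    triangle inequality for dist_R. *)
From HB Require Import structures.
From mathcomp Require Import all_boot all_order all_algebra.
From mathcomp Require Import boolp classical_sets reals constructive_ereal ereal.
From mathcomp Require Import lra.
Import Order.TTheory GRing.Theory Num.Theory.
Local Open Scope ring_scope.
Local Open Scope ereal_scope.

(* Nonnegativity excludes the case inf A = -oo, inf B = +oo, whose sum is -oo. *)
Lemma le_ereal_infD (R : realType) (A B : set \bar R) (z : \bar R) :
  (forall x, A x -> 0 <= x) -> (forall y, B y -> 0 <= y) ->
  (forall x y, A x -> B y -> z <= x + y) -> z <= ereal_inf A + ereal_inf B.
Proof.
move=> A_ge0 B_ge0 zAB.
have infA_ge0 : 0 <= ereal_inf A by apply: le_ereal_inf_tmp.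
have infB_ge0 : 0 <= ereal_inf B by apply: le_ereal_inf_tmp.
case eA: (ereal_inf A) infA_ge0 => [a| |] // _; last first.
  by case: (ereal_inf B) infB_ge0 => [b| |] // _; rewrite leey.
case eB: (ereal_inf B) infB_ge0 => [b| |] // _; last by rewrite leey.
apply/lee_addgt0Pr => e e_gt0.
have /ereal_inf_lt[x Ax ltx] : ereal_inf A < (a + e / 2)%:E.
  by rewrite eA lte_fin ltrDl divr_gt0.
have /ereal_inf_lt[y By lty] : ereal_inf B < (b + e / 2)%:E.
  by rewrite eB lte_fin ltrDl divr_gt0.
apply: le_trans (zAB _ _ Ax By) _.
apply: le_trans (leeD (ltW ltx) (ltW lty)) _.
by rewrite -EFinD lee_fin; lra.
Qed.

Lemma mcost_ge0 (k : fieldType) (disp : Order.disp_t) (P : finPOrderType disp)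
  (R : realType) (d : P -> P -> R) (M N : pmod k P) (E : projres M)
  (F : projres N) B : 0 <= mcost d E F B.
Proof. by apply: ereal_sup_ubound; left. Qed.

Section Matchings.
Variables (k : fieldType) (disp : Order.disp_t) (P : finPOrderType disp).
Variables (M N O : pmod k P) (E : projres M) (F : projres N) (G : projres O).

Lemma is_matching_comp B B' : is_matching E F B -> is_matching F G B' ->
  is_matching E G (fun i => B' i \o B i).
Proof.
move=> [B_bij B_entries] [B'_bij B'_entries]; split.
  by move=> i; apply: bij_comp.
by move=> i x' x; rewrite B_entries B'_entries.
Qed.

Variables (R : realType) (d : P -> P -> R).

Hypothesis d_triangle : forall x y z, (d x z <= d x y + d y z)%R.

Lemma mcost_comp_le B B' :
  mcost d E G (fun i => B' i \o B i) <= mcost d E F B + mcost d F G B'.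
Proof.
apply: ge_ereal_sup => _ [->|[i [x ->]]].
  by rewrite adde_ge0 ?mcost_ge0.
have cost_B : (d (rlab E i x) (rlab F i (B i x)))%:E <= mcost d E F B.
  by apply: ereal_sup_ubound; right; exists i, x.
have cost_B' : (d (rlab F i (B i x)) (rlab G i (B' i (B i x))))%:E
               <= mcost d F G B'.
  by apply: ereal_sup_ubound; right; exists i, (B i x).
by apply: le_trans (leeD cost_B cost_B'); rewrite -EFinD lee_fin d_triangle.
Qed.

End Matchings.

Theorem lemma4p5 (k : fieldType) (R : realType) (disp : Order.disp_t)
  (P : finPOrderType disp) (d : P -> P -> R) (hd : is_metric d)
  (M N O : pmod k P) (E : projres M) (F : projres N) (G : projres O)
  (hEF : forall i, rn E i = rn F i) (hFG : forall i, rn F i = rn G i) :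
  distR d E G <= distR d E F + distR d F G.
Proof.
case: hd => _ _ d_triangle.
apply: le_ereal_infD => [_ [B _ <-]|_ [B' _ <-]|_ _ [B mB <-] [B' mB' <-]].
- exact: mcost_ge0.
- exact: mcost_ge0.
apply: ge_ereal_inf; exists (mcost d E G (fun i => B' i \o B i)).
  by exists (fun i => B' i \o B i); first exact: is_matching_comp.
exact: mcost_comp_le.
Qed.
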